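(* Let $\gamma>1$ and let $(v,\tau,p)$ be a $C^2$ solution with $\tau>0$, $p>0$ of the system $$\partial_t v+v\partial_x v+\tau\partial_x p=0,\qquad \partial_t\tau+v\partial_x\tau-\tau\partial_x v=0,\qquad \partial_t p+v\partial_x p+\gamma p\,\partial_x v=0 .$$ Set $s=\sqrt{\gamma p/\tau}$, $\xi_1=v-\sqrt{\gamma p\tau}$, $\xi_2=v$, $\xi_3=v+\sqrt{\gamma p\tau}$, and $$\mathcal P_1=\partial_x v-\frac{\partial_x p}{s},\qquad \mathcal P_2=s\,\partial_x\tau+\frac{\partial_x p}{s},\qquad \mathcal P_3=\partial_x v+\frac{\partial_x p}{s}.$$ Then $\partial_t\mathcal P_k+\xi_k\partial_x\mathcal P_k=\mathbf F_k(\mathcal P_1,\mathcal P_2,\mathcal P_3)$ for $k=1,2,3$, where $$\mathbf F_1=-\tfrac{\gamma+1}{4}\mathcal P_1^2+\tfrac14\mathcal P_1\mathcal P_2-\tfrac{3-\gamma}{4}\mathcal P_1\mathcal P_3-\tfrac14\mathcal P_2\mathcal P_3,$$ $$\mathbf F_2=-\tfrac{\gamma+1}{4}\mathcal P_2(\mathcal P_1+\mathcal P_3),$$ $$\mathbf F_3=-\tfrac{\gamma+1}{4}\mathcal P_3^2+\tfrac14\mathcal P_1\mathcal P_2-\tfrac{3-\gamma}{4}\mathcal P_1\mathcal P_3-\tfrac14\mathcal P_2\mathcal P_3 .$$ In particular the right-hand sides are quadratic polynomials in $(\mathcal P_1,\mathcal P_2,\mathcal P_3)$ with constant coefficients, independent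 of $(v,\tau,p)$.
   Context: Here $v$ is velocity, $\tau=1/\rho$ is specific volume and $p$ is pressure of a polytropic gas with adiabatic exponent $\gamma$; the system is the 1D non-isentropic Euler system written in these variables. The $\xi_k$ are the eigenvalues of the system's coefficient matrix and $\mathcal P_k=l^k\cdot\partial_x(v,\tau,p)$ with left eigenvectors $l^1=(1,0,-s^{-1})$, $l^2=(0,s,s^{-1})$, $l^3=(1,0,s^{-1})$. *)

From Stdlib Require Export Reals.
Open Scope R_scope.

Definition open2 (U : R -> R -> Prop) : Prop :=
  forall t x, U t x -> exists r, 0 < r /\
    forall t' x', Rabs (t' - t) < r -> Rabs (x' - x) < r -> U t' x'.

Definition cont_on (U : R -> R -> Prop) (f : R -> R -> R) : Prop :=
  forall t x, U t x -> forall eps, 0 < eps -> exists delta, 0 < delta /\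
    forall t' x', Rabs (t' - t) < delta -> Rabs (x' - x) < delta ->
      Rabs (f t' x' - f t x) < eps.

Definition partial_t_on (U : R -> R -> Prop) (f ft : R -> R -> R) : Prop :=
  forall t x, U t x -> derivable_pt_lim (fun s => f s x) t (ft t x).

Definition partial_x_on (U : R -> R -> Prop) (f fx : R -> R -> R) : Prop :=
  forall t x, U t x -> derivable_pt_lim (fun y => f t y) x (fx t x).

Definition C2_on (U : R -> R -> Prop) (f : R -> R -> R) : Prop :=
  exists ft fx ftt ftx fxt fxx : R -> R -> R,
    partial_t_on U f ft /\ partial_x_on U f fx /\
    partial_t_on U ft ftt /\ partial_x_on U ft ftx /\
    partial_t_on U fx fxt /\ partial_x_on U fx fxx /\
    cont_on U f /\ cont_on U ft /\ cont_on U fx /\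
    cont_on U ftt /\ cont_on U ftx /\ cont_on U fxt /\ cont_on U fxx.

Definition sfun (gamma tau p : R) : R := sqrt (gamma * p / tau).

Definition xi1 (gamma v tau p : R) : R := v - sqrt (gamma * p * tau).
Definition xi2 (gamma v tau p : R) : R := v.
Definition xi3 (gamma v tau p : R) : R := v + sqrt (gamma * p * tau).

Definition P1 (gamma tau p vx taux px : R) : R := vx - px / sfun gamma tau p.
Definition P2 (gamma tau p vx taux px : R) : R :=
  sfun gamma tau p * taux + px / sfun gamma tau p.
Definition P3 (gamma tau p vx taux px : R) : R := vx + px / sfun gamma tau p.

Definition F1 (gamma a b c : R) : R :=
  - ((gamma + 1) / 4) * a ^ 2 + (1 / 4) * a * b
  - ((3 - gamma) / 4) * a * c - (1 / 4) * b * c.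
Definition F2 (gamma a b c : R) : R :=
  - ((gamma + 1) / 4) * b * (a + c).
Definition F3 (gamma a b c : R) : R :=
  - ((gamma + 1) / 4) * c ^ 2 + (1 / 4) * a * b
  - ((3 - gamma) / 4) * a * c - (1 / 4) * b * c.

(* Differentiating P_k along the k-th characteristic produces second
   derivatives of (v, tau, p). The mixed derivatives are removed by exchanging
   the order of differentiation and differentiating the system in x; the second
   x-derivatives that remain cancel because l^k is a left eigenvector for xi_k.
   What is left is a rational expression in s, tau, p and the first
   x-derivatives, and eliminating gamma through s^2 tau = gamma p turns it into
   the stated quadratic form in P_1, P_2, P_3. *)

From Stdlib Require Import Reals Lra.
Open Scope R_scope.

Lemma derivable_pt_lim_eq_deriv f x a b :
  derivable_pt_lim f x a -> a = b -> derivable_pt_lim f x b.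
Proof. now intros H <-. Qed.

Lemma derivable_pt_lim_add f g x a b :
  derivable_pt_lim f x a -> derivable_pt_lim g x b ->
  derivable_pt_lim (fun y => f y + g y) x (a + b).
Proof. apply (derivable_pt_lim_plus f g). Qed.

Lemma derivable_pt_lim_sub f g x a b :
  derivable_pt_lim f x a -> derivable_pt_lim g x b ->
  derivable_pt_lim (fun y => f y - g y) x (a - b).
Proof. apply (derivable_pt_lim_minus f g). Qed.

Lemma derivable_pt_lim_mul f g x a b :
  derivable_pt_lim f x a -> derivable_pt_lim g x b ->
  derivable_pt_lim (fun y => f y * g y) x (a * g x + f x * b).
Proof. apply (derivable_pt_lim_mult f g). Qed.

Lemma derivable_pt_lim_neg f x a :
  derivable_pt_lim f x a -> derivable_pt_lim (fun y => - f y) x (- a).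
Proof. apply (derivable_pt_lim_opp f). Qed.

Lemma derivable_pt_lim_quot f g x a b :
  derivable_pt_lim f x a -> derivable_pt_lim g x b -> g x <> 0 ->
  derivable_pt_lim (fun y => f y / g y) x ((a * g x - b * f x) / (g x)²).
Proof. apply (derivable_pt_lim_div f g). Qed.

Lemma derivable_pt_lim_sqrt_comp f x a :
  0 < f x -> derivable_pt_lim f x a ->
  derivable_pt_lim (fun y => sqrt (f y)) x (/ (2 * sqrt (f x)) * a).
Proof.
  intros Hf Hd. apply (derivable_pt_lim_comp f sqrt); auto.
  now apply derivable_pt_lim_sqrt.
Qed.

Section OpenSet.
Variable U : R -> R -> Prop.
Hypothesis HU : open2 U.

Lemma derivable_pt_lim_ext_slice_x t x f g l :
  U t x -> (forall y, U t y -> f y = g y) ->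
  derivable_pt_lim f x l -> derivable_pt_lim g x l.
Proof.
  intros Ut Hfg. destruct (HU t x Ut) as [r [Hr Hball]].
  apply derivable_pt_lim_locally_ext with (x - r) (x + r); [lra|].
  intros y Hy. apply Hfg, Hball; rewrite ?Rminus_diag, ?Rabs_R0; [lra|].
  apply Rabs_def1; lra.
Qed.

Lemma derivable_pt_lim_ext_slice_t t x f g l :
  U t x -> (forall s, U s x -> f s = g s) ->
  derivable_pt_lim f t l -> derivable_pt_lim g t l.
Proof.
  intros Ut Hfg. destruct (HU t x Ut) as [r [Hr Hball]].
  apply derivable_pt_lim_locally_ext with (t - r) (t + r); [lra|].
  intros s Hs. apply Hfg, Hball; rewrite ?Rminus_diag, ?Rabs_R0; [|lra].
  apply Rabs_def1; lra.
Qed.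

Lemma partial_t_on_unique f ft ft' t x :
  partial_t_on U f ft -> partial_t_on U f ft' -> U t x -> ft t x = ft' t x.
Proof. intros H H' Ut. exact (uniqueness_limite _ _ _ _ (H t x Ut) (H' t x Ut)). Qed.

Lemma partial_x_on_unique f fx fx' t x :
  partial_x_on U f fx -> partial_x_on U f fx' -> U t x -> fx t x = fx' t x.
Proof. intros H H' Ut. exact (uniqueness_limite _ _ _ _ (H t x Ut) (H' t x Ut)). Qed.

End OpenSet.

(** * Symmetry of mixed partial derivatives *)

Section Schwarz.
Variables (U : R -> R -> Prop) (f ft fx ftx fxt : R -> R -> R).
Hypotheses (Hft : partial_t_on U f ft) (Hfx : partial_x_on U f fx)
  (Hftx : partial_x_on U ft ftx) (Hfxt : partial_t_on U fx fxt).

(* Both mixed partials compute the double difference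
   f(t+h,x+h) - f(t+h,x) - f(t,x+h) + f(t,x) divided by h^2, by the mean value
   theorem applied in either order. *)
Lemma mixed_partials_mean_value t x h :
  0 < h -> (forall s y, t <= s <= t + h -> x <= y <= x + h -> U s y) ->
  exists s1 y1 s2 y2,
    t < s1 < t + h /\ x < y1 < x + h /\ t < s2 < t + h /\ x < y2 < x + h /\
    ftx s1 y1 = fxt s2 y2.
Proof.
  intros Hh InU.
  destruct (MVT_cor2 (fun s => f s (x + h) - f s x) (fun s => ft s (x + h) - ft s x)
              t (t + h)) as [s1 [E1 Hs1]]; [lra| |].
  { intros c Hc. apply (derivable_pt_lim_minus (fun s => f s (x + h)) (fun s => f s x));
      apply Hft, InU; lra. }
  destruct (MVT_cor2 (ft s1) (ftx s1) x (x + h)) as [y1 [E2 Hy1]]; [lra| |].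
  { intros c Hc. apply Hftx, InU; lra. }
  destruct (MVT_cor2 (fun y => f (t + h) y - f t y) (fun y => fx (t + h) y - fx t y)
              x (x + h)) as [y2 [E3 Hy2]]; [lra| |].
  { intros c Hc. apply (derivable_pt_lim_minus (f (t + h)) (f t));
      apply Hfx, InU; lra. }
  destruct (MVT_cor2 (fun s => fx s y2) (fun s => fxt s y2) t (t + h))
    as [s2 [E4 Hs2]]; [lra| |].
  { intros c Hc. apply Hfxt, InU; lra. }
  exists s1, y1, s2, y2. repeat split; try lra.
  replace (t + h - t) with h in * by ring. replace (x + h - x) with h in * by ring.
  apply Rmult_eq_reg_r with (h * h); [|nra].
  cbv beta in *. rewrite E2 in E1. rewrite E4 in E3. lra.
Qed.

Lemma mixed_partials_eq t x :
  open2 U -> cont_on U ftx -> cont_on U fxt -> U t x -> ftx t x = fxt t x.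
Proof.
  intros HU Cftx Cfxt Ut.
  destruct (HU t x Ut) as [r [Hr Hball]].
  assert (close : forall eps, 0 < eps ->
            ftx t x - fxt t x < eps /\ fxt t x - ftx t x < eps).
  { intros eps Heps.
    destruct (Cftx t x Ut (eps / 2)) as [d1 [Hd1 K1]]; [lra|].
    destruct (Cfxt t x Ut (eps / 2)) as [d2 [Hd2 K2]]; [lra|].
    set (h := Rmin r (Rmin d1 d2) / 2).
    assert (Hm : 0 < Rmin r (Rmin d1 d2)) by (repeat apply Rmin_pos; auto).
    pose proof (Rmin_l r (Rmin d1 d2)). pose proof (Rmin_r r (Rmin d1 d2)).
    pose proof (Rmin_l d1 d2). pose proof (Rmin_r d1 d2).
    destruct (mixed_partials_mean_value t x h) as (s1 & y1 & s2 & y2 & ? & ? & ? & ? & E);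
      [unfold h; lra| |].
    { intros s y Hs Hy. apply Hball; rewrite Rabs_right; unfold h in *; lra. }
    assert (A1 : Rabs (ftx s1 y1 - ftx t x) < eps / 2)
      by (apply K1; rewrite Rabs_right; unfold h in *; lra).
    assert (A2 : Rabs (fxt s2 y2 - fxt t x) < eps / 2)
      by (apply K2; rewrite Rabs_right; unfold h in *; lra).
    rewrite E in A1. apply Rabs_def2 in A1. apply Rabs_def2 in A2. lra. }
  apply Rle_antisym; apply Rle_plus_epsilon; intros eps Heps;
    destruct (close eps Heps); lra.
Qed.

End Schwarz.

Section C2.
Variables (U : R -> R -> Prop) (f ft fx : R -> R -> R).
Hypotheses (HU : open2 U) (Hf : C2_on U f)
  (Hft : partial_t_on U f ft) (Hfx : partial_x_on U f fx).

Lemma C2_partial_xx t x : U t x -> exists fxx, derivable_pt_lim (fx t) x fxx.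
Proof.
  intros Ut.
  destruct Hf as (ft' & fx' & _ & _ & _ & fxx & _ & Hfx' & _ & _ & _ & Hfxx & _).
  exists (fxx t x).
  apply (derivable_pt_lim_ext_slice_x U HU t x (fx' t)); [exact Ut| |exact (Hfxx t x Ut)].
  intros y Uy. exact (partial_x_on_unique U f fx' fx t y Hfx' Hfx Uy).
Qed.

Lemma C2_partial_t_partial_x t x ftx :
  U t x -> derivable_pt_lim (ft t) x ftx -> derivable_pt_lim (fun s => fx s x) t ftx.
Proof.
  intros Ut dftx.
  destruct Hf as (ft' & fx' & _ & ftx' & fxt & _ & Hft' & Hfx' & _ & Hftx' & Hfxt & _
                  & _ & _ & _ & _ & Cftx & Cfxt & _).
  assert (E : ftx = ftx' t x).
  { apply (uniqueness_limite (ft t) x); [exact dftx|].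
    apply (derivable_pt_lim_ext_slice_x U HU t x (ft' t)); [exact Ut| |exact (Hftx' t x Ut)].
    intros y Uy. exact (partial_t_on_unique U f ft' ft t y Hft' Hft Uy). }
  rewrite E, (mixed_partials_eq U f ft' fx' ftx' fxt Hft' Hfx' Hftx' Hfxt t x HU Cftx Cfxt Ut).
  apply (derivable_pt_lim_ext_slice_t U HU t x (fun s => fx' s x)); [exact Ut| |exact (Hfxt t x Ut)].
  intros s Us. exact (partial_x_on_unique U f fx' fx s x Hfx' Hfx Us).
Qed.

End C2.

Lemma sfun_pos g T P : 0 < g -> 0 < T -> 0 < P -> 0 < sfun g T P.
Proof.
  intros. apply sqrt_lt_R0, Rdiv_lt_0_compat; [apply Rmult_lt_0_compat|]; auto.
Qed.

Lemma sfun_sqr g T P : 0 < g -> 0 < T -> 0 < P -> sfun g T P * sfun g T P = g * P / T.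
Proof.
  intros. apply sqrt_sqrt, Rlt_le, Rdiv_lt_0_compat; [apply Rmult_lt_0_compat|]; auto.
Qed.

Lemma sqrt_gamma_p_tau g T P :
  0 < g -> 0 < T -> 0 < P -> sqrt (g * P * T) = sfun g T P * T.
Proof.
  intros Hg HT HP. unfold sfun.
  replace (g * P * T) with (g * P / T * (T * T)) by (field; lra).
  rewrite sqrt_mult, sqrt_square; try lra.
  - apply Rlt_le, Rdiv_lt_0_compat; [apply Rmult_lt_0_compat|]; auto.
  - apply Rlt_le, Rmult_lt_0_compat; auto.
Qed.

Definition sfun_logderiv (tau p dtau dp : R) : R := (dp / p - dtau / tau) / 2.

Lemma derivable_pt_lim_sfun g T P z dT dP :
  0 < g -> 0 < T z -> 0 < P z ->
  derivable_pt_lim T z dT -> derivable_pt_lim P z dP ->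
  derivable_pt_lim (fun y => sfun g (T y) (P y)) z
    (sfun g (T z) (P z) * sfun_logderiv (T z) (P z) dT dP).
Proof.
  intros Hg HT HP dT' dP'.
  pose proof (sfun_pos g _ _ Hg HT HP) as HS.
  pose proof (sfun_sqr g _ _ Hg HT HP) as HS2.
  eapply derivable_pt_lim_eq_deriv.
  - apply derivable_pt_lim_sqrt_comp.
    + apply Rdiv_lt_0_compat; [apply Rmult_lt_0_compat|]; auto.
    + apply derivable_pt_lim_quot; [|exact dT'|lra].
      apply derivable_pt_lim_mul; [apply derivable_pt_lim_const|exact dP'].
  - unfold sfun, sfun_logderiv, Rsqr in *.
    set (S := sqrt (g * P z / T z)) in *. clearbody S.
    replace g with (S * S * T z / P z) by (rewrite HS2; field; lra).
    field. lra.
Qed.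

Lemma derivable_pt_lim_div_sfun g T P c z dT dP dc :
  0 < g -> 0 < T z -> 0 < P z ->
  derivable_pt_lim T z dT -> derivable_pt_lim P z dP -> derivable_pt_lim c z dc ->
  derivable_pt_lim (fun y => c y / sfun g (T y) (P y)) z
    ((dc - c z * sfun_logderiv (T z) (P z) dT dP) / sfun g (T z) (P z)).
Proof.
  intros Hg HT HP dT' dP' dc'.
  pose proof (sfun_pos g _ _ Hg HT HP) as HS.
  eapply derivable_pt_lim_eq_deriv.
  - apply derivable_pt_lim_quot; [exact dc'|apply derivable_pt_lim_sfun; eauto|lra].
  - unfold Rsqr. field. lra.
Qed.

Definition dP1 (gamma tau p px dtau dp dvx dpx : R) : R :=
  dvx - (dpx - px * sfun_logderiv tau p dtau dp) / sfun gamma tau p.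
Definition dP2 (gamma tau p taux px dtau dp dtaux dpx : R) : R :=
  sfun gamma tau p * (dtaux + taux * sfun_logderiv tau p dtau dp)
  + (dpx - px * sfun_logderiv tau p dtau dp) / sfun gamma tau p.
Definition dP3 (gamma tau p px dtau dp dvx dpx : R) : R :=
  dvx + (dpx - px * sfun_logderiv tau p dtau dp) / sfun gamma tau p.

Section ChainRule.
Variables (g : R) (T P a b c : R -> R) (z dT dP da db dc : R).
Hypotheses (Hg : 0 < g) (HT : 0 < T z) (HP : 0 < P z).
Hypotheses (dT' : derivable_pt_lim T z dT) (dP' : derivable_pt_lim P z dP)
  (da' : derivable_pt_lim a z da) (db' : derivable_pt_lim b z db)
  (dc' : derivable_pt_lim c z dc).

Lemma derivable_pt_lim_P1 :
  derivable_pt_lim (fun y => P1 g (T y) (P y) (a y) (b y) (c y)) z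
    (dP1 g (T z) (P z) (c z) dT dP da dc).
Proof.
  apply derivable_pt_lim_sub; [exact da'|now apply derivable_pt_lim_div_sfun].
Qed.

Lemma derivable_pt_lim_P2 :
  derivable_pt_lim (fun y => P2 g (T y) (P y) (a y) (b y) (c y)) z
    (dP2 g (T z) (P z) (b z) (c z) dT dP db dc).
Proof.
  eapply derivable_pt_lim_eq_deriv.
  - apply derivable_pt_lim_add; [apply derivable_pt_lim_mul; [|exact db']|];
      [eapply derivable_pt_lim_sfun | eapply derivable_pt_lim_div_sfun]; eassumption.
  - unfold dP2. ring.
Qed.

Lemma derivable_pt_lim_P3 :
  derivable_pt_lim (fun y => P3 g (T y) (P y) (a y) (b y) (c y)) z
    (dP3 g (T z) (P z) (c z) dT dP da dc).
Proof.
  apply derivable_pt_lim_add; [exact da'|now apply derivable_pt_lim_div_sfun].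
Qed.

End ChainRule.

(** * The characteristic identities *)

Section Characteristic.
Variables g v T P vx Tx Px vxx Txx Pxx Tt Pt vxt Txt Pxt : R.
Hypotheses (Hg : 0 < g) (HT : 0 < T) (HP : 0 < P).
Hypotheses (HTt : Tt = T * vx - v * Tx) (HPt : Pt = - (v * Px + g * P * vx))
  (Hvxt : vxt = - (vx * vx + v * vxx + Tx * Px + T * Pxx))
  (HTxt : Txt = T * vxx - v * Txx)
  (HPxt : Pxt = - ((g + 1) * vx * Px + v * Pxx + g * P * vxx)).

Ltac characteristic_field :=
  unfold dP1, dP2, dP3, P1, P2, P3, F1, F2, F3, xi1, xi2, xi3, sfun_logderiv;
  rewrite ?sqrt_gamma_p_tau by assumption;
  pose proof (sfun_pos g T P Hg HT HP);
  pose proof (sfun_sqr g T P Hg HT HP) as HS2;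
  subst;
  set (S := sfun g T P) in *; clearbody S;
  replace g with (S * S * T / P) by (rewrite HS2; field; lra);
  field; lra.

Lemma P1_characteristic :
  dP1 g T P Px Tt Pt vxt Pxt + xi1 g v T P * dP1 g T P Px Tx Px vxx Pxx
  = F1 g (P1 g T P vx Tx Px) (P2 g T P vx Tx Px) (P3 g T P vx Tx Px).
Proof. characteristic_field. Qed.

Lemma P2_characteristic :
  dP2 g T P Tx Px Tt Pt Txt Pxt + xi2 g v T P * dP2 g T P Tx Px Tx Px Txx Pxx
  = F2 g (P1 g T P vx Tx Px) (P2 g T P vx Tx Px) (P3 g T P vx Tx Px).
Proof. characteristic_field. Qed.

Lemma P3_characteristic :
  dP3 g T P Px Tt Pt vxt Pxt + xi3 g v T P * dP3 g T P Px Tx Px vxx Pxx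
  = F3 g (P1 g T P vx Tx Px) (P2 g T P vx Tx Px) (P3 g T P vx Tx Px).
Proof. characteristic_field. Qed.

End Characteristic.

Section EulerSolution.
Variables (gamma : R) (U : R -> R -> Prop) (v tau p vt vx taut taux pt px : R -> R -> R).
Hypotheses (Hgamma : 0 < gamma) (HU : open2 U)
  (C2v : C2_on U v) (C2tau : C2_on U tau) (C2p : C2_on U p)
  (Hvt : partial_t_on U v vt) (Hvx : partial_x_on U v vx)
  (Htaut : partial_t_on U tau taut) (Htaux : partial_x_on U tau taux)
  (Hpt : partial_t_on U p pt) (Hpx : partial_x_on U p px)
  (Hpos : forall t x, U t x -> 0 < tau t x /\ 0 < p t x)
  (Heuler : forall t x, U t x ->
     vt t x + v t x * vx t x + tau t x * px t x = 0 /\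
     taut t x + v t x * taux t x - tau t x * vx t x = 0 /\
     pt t x + v t x * px t x + gamma * p t x * vx t x = 0).

(* The time derivatives of the x-derivatives come from differentiating the
   system in x and exchanging the order of differentiation. *)
Lemma euler_jet t x : U t x ->
  exists vxx tauxx pxx,
    derivable_pt_lim (vx t) x vxx /\ derivable_pt_lim (taux t) x tauxx /\
    derivable_pt_lim (px t) x pxx /\
    derivable_pt_lim (fun s => vx s x) t
      (- (vx t x * vx t x + v t x * vxx + taux t x * px t x + tau t x * pxx)) /\
    derivable_pt_lim (fun s => taux s x) t (tau t x * vxx - v t x * tauxx) /\
    derivable_pt_lim (fun s => px s x) t
      (- ((gamma + 1) * vx t x * px t x + v t x * pxx + gamma * p t x * vxx)).
Proof.
  intros Ut.
  destruct (C2_partial_xx U v vx HU C2v Hvx t x Ut) as [vxx dvxx].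
  destruct (C2_partial_xx U tau taux HU C2tau Htaux t x Ut) as [tauxx dtauxx].
  destruct (C2_partial_xx U p px HU C2p Hpx t x Ut) as [pxx dpxx].
  exists vxx, tauxx, pxx. repeat split; try assumption.
  - apply (C2_partial_t_partial_x U v vt vx HU C2v Hvt Hvx t x); [exact Ut|].
    apply (derivable_pt_lim_ext_slice_x U HU t x
             (fun y => - (v t y * vx t y + tau t y * px t y))); [exact Ut| |].
    + intros y Uy. destruct (Heuler t y Uy). lra.
    + eapply derivable_pt_lim_eq_deriv;
        [apply derivable_pt_lim_neg, derivable_pt_lim_add;
           apply derivable_pt_lim_mul; eauto|].
      ring.
  - apply (C2_partial_t_partial_x U tau taut taux HU C2tau Htaut Htaux t x); [exact Ut|].
    apply (derivable_pt_lim_ext_slice_x U HU t x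
             (fun y => tau t y * vx t y - v t y * taux t y)); [exact Ut| |].
    + intros y Uy. destruct (Heuler t y Uy). lra.
    + eapply derivable_pt_lim_eq_deriv;
        [apply derivable_pt_lim_sub; apply derivable_pt_lim_mul; eauto|].
      ring.
  - apply (C2_partial_t_partial_x U p pt px HU C2p Hpt Hpx t x); [exact Ut|].
    apply (derivable_pt_lim_ext_slice_x U HU t x
             (fun y => - (v t y * px t y + gamma * p t y * vx t y))); [exact Ut| |].
    + intros y Uy. destruct (Heuler t y Uy). lra.
    + eapply derivable_pt_lim_eq_deriv.
      * apply derivable_pt_lim_neg, derivable_pt_lim_add; apply derivable_pt_lim_mul;
          eauto; apply derivable_pt_lim_mul; eauto; apply derivable_pt_lim_const.
      * cbv beta. ring.
Qed.

Lemma euler_taut t x : U t x -> taut t x = tau t x * vx t x - v t x * taux t x.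
Proof. intros Ut. destruct (Heuler t x Ut) as (_ & E & _). lra. Qed.

Lemma euler_pt t x : U t x -> pt t x = - (v t x * px t x + gamma * p t x * vx t x).
Proof. intros Ut. destruct (Heuler t x Ut) as (_ & _ & E). lra. Qed.

Lemma P1_transport t x : U t x ->
  exists a b,
    derivable_pt_lim (fun s => P1 gamma (tau s x) (p s x) (vx s x) (taux s x) (px s x)) t a /\
    derivable_pt_lim (fun y => P1 gamma (tau t y) (p t y) (vx t y) (taux t y) (px t y)) x b /\
    a + xi1 gamma (v t x) (tau t x) (p t x) * b
    = F1 gamma (P1 gamma (tau t x) (p t x) (vx t x) (taux t x) (px t x))
               (P2 gamma (tau t x) (p t x) (vx t x) (taux t x) (px t x))
               (P3 gamma (tau t x) (p t x) (vx t x) (taux t x) (px t x)).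
Proof.
  intros Ut. destruct (Hpos t x Ut) as [HT HP].
  destruct (euler_jet t x Ut) as (vxx & tauxx & pxx & dvxx & dtauxx & dpxx & dvxt & dtauxt & dpxt).
  eexists _, _; split; [|split].
  - apply derivable_pt_lim_P1; eauto.
  - apply derivable_pt_lim_P1; eauto.
  - eapply P1_characteristic; eauto using euler_taut, euler_pt.
Qed.

Lemma P2_transport t x : U t x ->
  exists a b,
    derivable_pt_lim (fun s => P2 gamma (tau s x) (p s x) (vx s x) (taux s x) (px s x)) t a /\
    derivable_pt_lim (fun y => P2 gamma (tau t y) (p t y) (vx t y) (taux t y) (px t y)) x b /\
    a + xi2 gamma (v t x) (tau t x) (p t x) * b
    = F2 gamma (P1 gamma (tau t x) (p t x) (vx t x) (taux t x) (px t x))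
               (P2 gamma (tau t x) (p t x) (vx t x) (taux t x) (px t x))
               (P3 gamma (tau t x) (p t x) (vx t x) (taux t x) (px t x)).
Proof.
  intros Ut. destruct (Hpos t x Ut) as [HT HP].
  destruct (euler_jet t x Ut) as (vxx & tauxx & pxx & dvxx & dtauxx & dpxx & dvxt & dtauxt & dpxt).
  eexists _, _; split; [|split].
  - apply derivable_pt_lim_P2; eauto.
  - apply derivable_pt_lim_P2; eauto.
  - eapply P2_characteristic; eauto using euler_taut, euler_pt.
Qed.

Lemma P3_transport t x : U t x ->
  exists a b,
    derivable_pt_lim (fun s => P3 gamma (tau s x) (p s x) (vx s x) (taux s x) (px s x)) t a /\
    derivable_pt_lim (fun y => P3 gamma (tau t y) (p t y) (vx t y) (taux t y) (px t y)) x b /\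
    a + xi3 gamma (v t x) (tau t x) (p t x) * b
    = F3 gamma (P1 gamma (tau t x) (p t x) (vx t x) (taux t x) (px t x))
               (P2 gamma (tau t x) (p t x) (vx t x) (taux t x) (px t x))
               (P3 gamma (tau t x) (p t x) (vx t x) (taux t x) (px t x)).
Proof.
  intros Ut. destruct (Hpos t x Ut) as [HT HP].
  destruct (euler_jet t x Ut) as (vxx & tauxx & pxx & dvxx & dtauxx & dpxx & dvxt & dtauxt & dpxt).
  eexists _, _; split; [|split].
  - apply derivable_pt_lim_P3; eauto.
  - apply derivable_pt_lim_P3; eauto.
  - eapply P3_characteristic; eauto using euler_taut, euler_pt.
Qed.

End EulerSolution.

Theorem mainTheorem3
  (gamma : R) (U : R -> R -> Prop)
  (v tau p vt vx taut taux pt px : R -> R -> R) :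
  1 < gamma ->
  open2 U ->
  C2_on U v -> C2_on U tau -> C2_on U p ->
  partial_t_on U v vt -> partial_x_on U v vx ->
  partial_t_on U tau taut -> partial_x_on U tau taux ->
  partial_t_on U p pt -> partial_x_on U p px ->
  (forall t x, U t x -> 0 < tau t x /\ 0 < p t x) ->
  (forall t x, U t x ->
     vt t x + v t x * vx t x + tau t x * px t x = 0 /\
     taut t x + v t x * taux t x - tau t x * vx t x = 0 /\
     pt t x + v t x * px t x + gamma * p t x * vx t x = 0) ->
  let Q1 := fun t x => P1 gamma (tau t x) (p t x) (vx t x) (taux t x) (px t x) in
  let Q2 := fun t x => P2 gamma (tau t x) (p t x) (vx t x) (taux t x) (px t x) in
  let Q3 := fun t x => P3 gamma (tau t x) (p t x) (vx t x) (taux t x) (px t x) in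
  forall t x, U t x ->
    (exists a b,
       derivable_pt_lim (fun s => Q1 s x) t a /\
       derivable_pt_lim (fun y => Q1 t y) x b /\
       a + xi1 gamma (v t x) (tau t x) (p t x) * b
         = F1 gamma (Q1 t x) (Q2 t x) (Q3 t x)) /\
    (exists a b,
       derivable_pt_lim (fun s => Q2 s x) t a /\
       derivable_pt_lim (fun y => Q2 t y) x b /\
       a + xi2 gamma (v t x) (tau t x) (p t x) * b
         = F2 gamma (Q1 t x) (Q2 t x) (Q3 t x)) /\
    (exists a b,
       derivable_pt_lim (fun s => Q3 s x) t a /\
       derivable_pt_lim (fun y => Q3 t y) x b /\
       a + xi3 gamma (v t x) (tau t x) (p t x) * b
         = F3 gamma (Q1 t x) (Q2 t x) (Q3 t x)).
Proof.
  intros Hgamma HU C2v C2tau C2p Hvt Hvx Htaut Htaux Hpt Hpx Hpos Heuler Q1 Q2 Q3 t x Ut.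
  assert (Hgamma0 : 0 < gamma) by lra.
  split; [|split];
    [ apply (P1_transport gamma U v tau p vt vx taut taux pt px)
    | apply (P2_transport gamma U v tau p vt vx taut taux pt px)
    | apply (P3_transport gamma U v tau p vt vx taut taux pt px) ]; assumption.
Qed.
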